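(* Let $N\ge 4$ be an integer. Suppose $w\in C^2([0,\infty))$ satisfies $$-w''(t)+(N-2)w'(t)+(N-1)w(t)=\frac{N-1}{2}\,e^{-t}\,w(t)^2\qquad\text{for all }t\ge 0,$$ together with $w'(0)-(N-1)w(0)=0$ and $\lim_{t\to+\infty}w(t)=0$. Then $w\equiv 0$.
   Context: This is the radial Navier problem (after the substitutions $v=u'$, $w(t)=-v(e^{-t})$) for $\Delta^2u=S_2[u]$ in the unit ball of $\mathbb{R}^N$ with $u=\Delta u=0$ on the boundary, where $S_2[u]$ is the sum of the $2\times2$ principal minors of the Hessian matrix of $u$; this is the case $k=2$, $\lambda=0$. *)

From Stdlib Require Import Reals.
From Coquelicot Require Import Coquelicot.
Open Scope R_scope.

Definition deriv_on_halfline (f f' : R -> R) : Prop :=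
  (forall t, 0 < t -> is_derive f t (f' t)) /\
  filterlim (fun h => (f h - f 0) / h) (at_right 0) (locally (f' 0)).

Definition cont_on_halfline (f : R -> R) : Prop :=
  (forall t, 0 < t -> continuous f t) /\
  filterlim f (at_right 0) (locally (f 0)).

Definition C2_halfline (w w1 w2 : R -> R) : Prop :=
  deriv_on_halfline w w1 /\ deriv_on_halfline w1 w2 /\ cont_on_halfline w2.

From Stdlib Require Import Reals Lra.
From Coquelicot Require Import Coquelicot.
Open Scope R_scope.

(* Write a = N - 1 >= 3.  The operator factors as -(d/dt - a)(d/dt + 1), so z = w' + w
   satisfies (e^(-a t) z)' = -(a/2) e^(-(a+1) t) w^2 <= 0.  If z were negative somewhere it
   would stay below some -d < 0, forcing w' <= -d/2 eventually, which is impossible since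
   w -> 0; so z >= 0, and the boundary condition gives w(0) >= 0.  The energy
     E = e^((1-a) t) (3 w'^2 - 2 a w w' - a^2 w^2) + a e^(-a t) w^3
   satisfies E' = (a - 3) e^((1-a) t) (w' - a w)^2 >= 0 (this is where N >= 4 enters) and
   E(0) = a w(0)^3.  If w(0) > 0, then 0 < E(0) <= E(t) <= 4 w'^2 + a |w|^3 keeps w'
   bounded below by a positive constant, again contradicting w -> 0.  Hence w(0) = 0, so
   e^(-a t) z is nonincreasing from 0 and nonnegative, hence identically 0; its vanishing
   derivative forces w = 0. *)

Lemma exp_le_compat (x y : R) : x <= y -> exp x <= exp y.
Proof.
  intros [Hlt | ->]; [apply Rlt_le, exp_increasing, Hlt | apply Rle_refl].
Qed.

Definition right_continuous_at (f : R -> R) (x : R) : Prop :=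
  filterlim f (at_right x) (locally (f x)).

Lemma filterlim_Rplus {T : Type} {F : (T -> Prop) -> Prop} {FF : Filter F}
  (f g : T -> R) (lf lg : R) :
  filterlim f F (locally lf) -> filterlim g F (locally lg) ->
  filterlim (fun x => f x + g x) F (locally (lf + lg)).
Proof. intros Hf Hg. exact (filterlim_comp_2 f g Rplus Hf Hg (filterlim_plus lf lg)). Qed.

Lemma filterlim_Rmult {T : Type} {F : (T -> Prop) -> Prop} {FF : Filter F}
  (f g : T -> R) (lf lg : R) :
  filterlim f F (locally lf) -> filterlim g F (locally lg) ->
  filterlim (fun x => f x * g x) F (locally (lf * lg)).
Proof. intros Hf Hg. exact (filterlim_comp_2 f g Rmult Hf Hg (filterlim_mult lf lg)). Qed.

Lemma right_continuous_at_of_continuous (f : R -> R) (x : R) :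
  continuous f x -> right_continuous_at f x.
Proof. apply filterlim_filter_le_1, filter_le_within. Qed.

Lemma right_continuous_at_const (c x : R) : right_continuous_at (fun _ => c) x.
Proof. apply filterlim_const. Qed.

Lemma right_continuous_at_id (x : R) : right_continuous_at (fun t => t) x.
Proof. apply right_continuous_at_of_continuous, continuous_id. Qed.

Lemma right_continuous_at_plus (f g : R -> R) (x : R) :
  right_continuous_at f x -> right_continuous_at g x ->
  right_continuous_at (fun t => f t + g t) x.
Proof. apply filterlim_Rplus. Qed.

Lemma right_continuous_at_mult (f g : R -> R) (x : R) :
  right_continuous_at f x -> right_continuous_at g x ->
  right_continuous_at (fun t => f t * g t) x.
Proof. apply filterlim_Rmult. Qed.

Lemma right_continuous_at_opp (f : R -> R) (x : R) :
  right_continuous_at f x -> right_continuous_at (fun t => - f t) x.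
Proof. intros Hf. exact (filterlim_comp _ _ _ f Ropp _ _ _ Hf (filterlim_opp (f x))). Qed.

Lemma right_continuous_at_minus (f g : R -> R) (x : R) :
  right_continuous_at f x -> right_continuous_at g x ->
  right_continuous_at (fun t => f t - g t) x.
Proof. intros Hf Hg. apply right_continuous_at_plus, right_continuous_at_opp; assumption. Qed.

Lemma right_continuous_at_pow (f : R -> R) (n : nat) (x : R) :
  right_continuous_at f x -> right_continuous_at (fun t => f t ^ n) x.
Proof.
  intros Hf. induction n as [| n IH]; simpl.
  - apply right_continuous_at_const.
  - apply right_continuous_at_mult; assumption.
Qed.

Lemma right_continuous_at_comp (g f : R -> R) (x : R) :
  continuous g (f x) -> right_continuous_at f x ->
  right_continuous_at (fun t => g (f t)) x.
Proof. intros Hg Hf. exact (filterlim_comp _ _ _ f g _ _ _ Hf Hg). Qed.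

Lemma right_continuous_of_right_derive (f : R -> R) (l : R) :
  filterlim (fun h => (f h - f 0) / h) (at_right 0) (locally l) ->
  right_continuous_at f 0.
Proof.
  intros Hl.
  assert (Hlim : filterlim (fun h => f 0 + h * ((f h - f 0) / h)) (at_right 0)
                   (locally (f 0 + 0 * l))).
  { apply filterlim_Rplus; [apply filterlim_const |].
    apply filterlim_Rmult; [apply right_continuous_at_id | exact Hl]. }
  rewrite Rmult_0_l, Rplus_0_r in Hlim.
  eapply filterlim_ext_loc; [| exact Hlim].
  exists (mkposreal 1 Rlt_0_1). intros h _ Hh. field. lra.
Qed.

Create HintDb right_continuity.
#[local] Hint Resolve right_continuous_at_const right_continuous_at_id right_continuous_at_plus
  right_continuous_at_minus right_continuous_at_mult right_continuous_at_opp
  right_continuous_at_pow right_continuous_at_comp continuous_exp : right_continuity.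

Lemma nondecreasing_of_derive_nonneg (F dF : R -> R) (x0 : R) :
  (forall t, x0 < t -> is_derive F t (dF t)) -> (forall t, x0 < t -> 0 <= dF t) ->
  right_continuous_at F x0 -> forall s t, x0 <= s -> s <= t -> F s <= F t.
Proof.
  intros HD Hpos Hrc.
  assert (Hopen : forall s t, x0 < s -> s <= t -> F s <= F t).
  { intros s t Hs Hst. destruct (MVT_gen F s t dF) as [c [Hc Hmvt]].
    - intros x Hx. rewrite Rmin_left, Rmax_right in Hx by lra. apply HD; lra.
    - intros x Hx. rewrite Rmin_left, Rmax_right in Hx by lra.
      apply continuity_pt_filterlim, (ex_derive_continuous F x). exists (dF x). apply HD; lra.
    - rewrite Rmin_left, Rmax_right in Hc by lra. pose proof (Hpos c ltac:(lra)). nra. }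
  intros s t Hs Hst.
  destruct (Rle_lt_or_eq_dec _ _ Hs) as [Hs' | <-]; [now apply Hopen |].
  destruct (Rle_lt_or_eq_dec _ _ Hst) as [Ht | <-]; [| apply Rle_refl].
  apply (closed_filterlim_loc F (fun u => u <= F t) (F x0) Hrc); [| apply closed_le].
  exists (mkposreal (t - x0) ltac:(lra)). intros y Hy Hxy.
  change (Rabs (y - x0) < t - x0) in Hy. apply Rabs_def2 in Hy.
  apply Hopen; lra.
Qed.

Lemma nonincreasing_of_derive_nonpos (F dF : R -> R) (x0 : R) :
  (forall t, x0 < t -> is_derive F t (dF t)) -> (forall t, x0 < t -> dF t <= 0) ->
  right_continuous_at F x0 -> forall s t, x0 <= s -> s <= t -> F t <= F s.
Proof.
  intros HD Hneg Hrc s t Hs Hst. apply Ropp_le_cancel.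
  apply (nondecreasing_of_derive_nonneg (fun t => - F t) (fun t => - dF t) x0); auto.
  - intros x Hx. exact (is_derive_opp F x (dF x) (HD x Hx)).
  - intros x Hx. pose proof (Hneg x Hx). lra.
  - apply right_continuous_at_opp, Hrc.
Qed.

Lemma is_lim_eventually_near (f : R -> R) (l eps : R) :
  is_lim f p_infty l -> 0 < eps -> Rbar_locally p_infty (fun t => Rabs (f t - l) < eps).
Proof. intros Hlim Heps. exact (Hlim _ (locally_ball l (mkposreal eps Heps))). Qed.

Lemma not_lim_of_derive_ge (f df : R -> R) (l d : R) : 0 < d ->
  Rbar_locally p_infty (fun t => is_derive f t (df t) /\ d <= df t) ->
  ~ is_lim f p_infty l.
Proof.
  intros Hd Hev Hlim.
  destruct (filter_and _ _ Hev (is_lim_eventually_near f l d Hlim Hd)) as [M HM].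
  destruct (MVT_gen f (M + 1) (M + 3) df) as [c [Hc Hmvt]].
  - intros x Hx. rewrite Rmin_left, Rmax_right in Hx by lra. apply HM; lra.
  - intros x Hx. rewrite Rmin_left, Rmax_right in Hx by lra.
    apply continuity_pt_filterlim, (ex_derive_continuous f x). exists (df x). apply HM; lra.
  - rewrite Rmin_left, Rmax_right in Hc by lra.
    destruct (HM c ltac:(lra)) as [[_ Hdc] _].
    destruct (HM (M + 1) ltac:(lra)) as [_ H1], (HM (M + 3) ltac:(lra)) as [_ H3].
    apply Rabs_def2 in H1, H3. nra.
Qed.

Lemma Rmin_le_of_energy_bound (a K x u : R) : 1 <= a ->
  K <= 4 * x ^ 2 + a * Rabs u ^ 3 -> Rabs u < 1 -> 16 * a * Rabs u < K -> 0 <= x + u ->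
  Rmin 1 (K / 8) <= x.
Proof.
  intros Ha HK Hu1 HuK Hsum.
  pose proof (Rle_abs u) as Hur. pose proof (Rabs_pos u) as Hr0.
  set (r := Rabs u) in *.
  assert (Hr3 : a * r ^ 3 <= a * r) by (apply Rmult_le_compat_l; [lra | simpl; nra]).
  assert (Har : 0 <= a * r) by (apply Rmult_le_pos; lra).
  assert (Hx2 : K / 8 <= x ^ 2) by lra.
  assert (Hx : 0 < x).
  { destruct (Rlt_or_le 0 x) as [| Hxneg]; [assumption | exfalso].
    assert (Hxr : - r <= x) by lra.
    assert (x ^ 2 <= r ^ 2) by (clear - Hxneg Hxr; simpl; nra).
    assert (r ^ 2 <= r) by (simpl; nra).
    nra. }
  destruct (Rle_lt_dec x 1).
  - apply Rle_trans with (K / 8); [apply Rmin_r | nra].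
  - apply Rle_trans with 1; [apply Rmin_l | lra].
Qed.

Section RadialNavier.

Variables (a : R) (w w1 w2 : R -> R).

Hypothesis a_ge_3 : 3 <= a.
Hypothesis w_derive : forall t, 0 < t -> is_derive w t (w1 t).
Hypothesis w1_derive : forall t, 0 < t -> is_derive w1 t (w2 t).
Hypothesis w_right_continuous : right_continuous_at w 0.
Hypothesis w1_right_continuous : right_continuous_at w1 0.
Hypothesis ode : forall t, 0 < t ->
  - w2 t + (a - 1) * w1 t + a * w t = a / 2 * exp (- t) * w t ^ 2.
Hypothesis w1_0 : w1 0 = a * w 0.
Hypothesis w_lim : is_lim w p_infty 0.

Lemma w2_eq t : 0 < t -> w2 t = (a - 1) * w1 t + a * w t - a / 2 * exp (- t) * w t ^ 2.
Proof. intros ht. pose proof (ode t ht). lra. Qed.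

(* [auto_derive] leaves derivatives in this eta-expanded form. *)
Lemma Derive_w t : 0 < t -> Derive (fun x => w x) t = w1 t.
Proof. intros ht. apply is_derive_unique, w_derive, ht. Qed.

Lemma Derive_w1 t : 0 < t -> Derive (fun x => w1 x) t = w2 t.
Proof. intros ht. apply is_derive_unique, w1_derive, ht. Qed.

Definition damped_sum t := exp (- a * t) * (w1 t + w t).

Lemma damped_sum_derive t : 0 < t ->
  is_derive damped_sum t (- (a / 2 * exp (- a * t) * exp (- t) * w t ^ 2)).
Proof.
  intros ht. unfold damped_sum. auto_derive.
  - repeat split; eexists; eauto.
  - rewrite Derive_w, Derive_w1, w2_eq by exact ht. field.
Qed.

Lemma damped_sum_nonincreasing s t : 0 <= s -> s <= t -> damped_sum t <= damped_sum s.
Proof.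
  apply (nonincreasing_of_derive_nonpos damped_sum _ 0 damped_sum_derive).
  - intros x _. apply Rge_le, Ropp_0_le_ge_contravar.
    pose proof (exp_pos (- a * x)). pose proof (exp_pos (- x)). pose proof (pow2_ge_0 (w x)).
    apply Rmult_le_pos; [| assumption]. apply Rmult_le_pos; [| lra]. apply Rmult_le_pos; lra.
  - unfold damped_sum. auto with right_continuity.
Qed.

Lemma sum_le_of_nonpos s t : 0 <= s -> s <= t -> w1 s + w s <= 0 ->
  w1 t + w t <= w1 s + w s.
Proof.
  intros hs hst hneg.
  pose proof (damped_sum_nonincreasing s t hs hst) as Hdamped. unfold damped_sum in Hdamped.
  assert (Hexp : exp (- a * t) <= exp (- a * s)) by (apply exp_le_compat; nra).
  pose proof (exp_pos (- a * t)).
  apply (Rmult_le_reg_l (exp (- a * t))); [assumption | nra].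
Qed.

Lemma sum_nonneg t0 : 0 <= t0 -> 0 <= w1 t0 + w t0.
Proof.
  intros ht0. destruct (Rle_or_lt 0 (w1 t0 + w t0)) as [| Hneg]; [assumption | exfalso].
  set (d := - (w1 t0 + w t0)).
  apply (not_lim_of_derive_ge (fun t => - w t) (fun t => - w1 t) (- 0) (d / 2));
    [unfold d; lra | | exact (is_lim_opp w p_infty 0 w_lim)].
  pose proof (is_lim_eventually_near w 0 (d / 2) w_lim ltac:(unfold d; lra)) as Hsmall.
  assert (Hlate : Rbar_locally p_infty (fun t => t0 < t)) by (exists t0; auto).
  generalize (filter_and _ _ Hsmall Hlate). apply filter_imp. intros t [Hw Ht]. split.
  - exact (is_derive_opp w t (w1 t) (w_derive t ltac:(lra))).
  - pose proof (sum_le_of_nonpos t0 t ht0 (Rlt_le _ _ Ht) (Rlt_le _ _ Hneg)).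
    apply Rabs_def2 in Hw. unfold d in *. lra.
Qed.

Lemma w_0_nonneg : 0 <= w 0.
Proof. pose proof (sum_nonneg 0 (Rle_refl 0)) as Hsum0. rewrite w1_0 in Hsum0. nra. Qed.

Definition energy t :=
  exp ((1 - a) * t) *
  (3 * w1 t ^ 2 - 2 * a * w t * w1 t - a ^ 2 * w t ^ 2 + a * exp (- t) * w t ^ 3).

Lemma energy_derive t : 0 < t ->
  is_derive energy t ((a - 3) * exp ((1 - a) * t) * (w1 t - a * w t) ^ 2).
Proof.
  intros ht. unfold energy. auto_derive.
  - repeat split; eexists; eauto.
  - rewrite Derive_w, Derive_w1, w2_eq by exact ht. field.
Qed.

Lemma energy_nondecreasing s t : 0 <= s -> s <= t -> energy s <= energy t.
Proof.
  apply (nondecreasing_of_derive_nonneg energy _ 0 energy_derive).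
  - intros x _. pose proof (exp_pos ((1 - a) * x)). pose proof (pow2_ge_0 (w1 x - a * w x)).
    apply Rmult_le_pos; [apply Rmult_le_pos |]; lra.
  - unfold energy. auto 10 with right_continuity.
Qed.

Lemma energy_0 : energy 0 = a * w 0 ^ 3.
Proof. unfold energy. rewrite !Rmult_0_r, Ropp_0, exp_0, w1_0. ring. Qed.

Lemma energy_le t : 0 <= t -> energy t <= 4 * w1 t ^ 2 + a * Rabs (w t) ^ 3.
Proof.
  intros ht. unfold energy.
  set (E := exp ((1 - a) * t)). set (F := exp (- t)). set (u := w t). set (v := w1 t).
  assert (HE : 0 < E <= 1).
  { split; [apply exp_pos |]. rewrite <- exp_0. apply exp_le_compat. nra. }
  assert (HF : 0 < F <= 1).
  { split; [apply exp_pos |]. rewrite <- exp_0. apply exp_le_compat. lra. }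
  assert (Hcube : F * u ^ 3 <= Rabs u ^ 3).
  { pose proof (Rle_abs (u ^ 3)) as Hu3. rewrite <- RPow_abs in Hu3.
    pose proof (pow_le (Rabs u) 3 (Rabs_pos u)). nra. }
  assert (Hquad : 3 * v ^ 2 - 2 * a * u * v - a ^ 2 * u ^ 2 <= 4 * v ^ 2)
    by (pose proof (pow2_ge_0 (v + a * u)); nra).
  assert (Hbound : 0 <= 4 * v ^ 2 + a * Rabs u ^ 3).
  { pose proof (pow_le (Rabs u) 3 (Rabs_pos u)). pose proof (pow2_ge_0 v). nra. }
  assert (Hinner : 3 * v ^ 2 - 2 * a * u * v - a ^ 2 * u ^ 2 + a * F * u ^ 3
                   <= 4 * v ^ 2 + a * Rabs u ^ 3) by nra.
  nra.
Qed.

Lemma w_0_eq0 : w 0 = 0.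
Proof.
  destruct (Rle_lt_or_eq_dec _ _ w_0_nonneg) as [Hpos | Hzero]; [exfalso | auto].
  set (K := a * w 0 ^ 3).
  assert (HK : 0 < K) by (unfold K; pose proof (pow_lt _ 3 Hpos); nra).
  assert (Heps : 0 < K / (16 * a)) by (apply Rdiv_lt_0_compat; lra).
  apply (not_lim_of_derive_ge w w1 0 (Rmin 1 (K / 8)));
    [apply Rmin_glb_lt; lra | | exact w_lim].
  pose proof (is_lim_eventually_near w 0 1 w_lim Rlt_0_1) as Hone.
  pose proof (is_lim_eventually_near w 0 _ w_lim Heps) as Hsmall.
  assert (Hlate : Rbar_locally p_infty (fun t => 0 < t)) by (exists 0; auto).
  generalize (filter_and _ _ Hlate (filter_and _ _ Hone Hsmall)).
  apply filter_imp. intros t [ht [H1 Hr]]. split; [apply w_derive, ht |].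
  rewrite Rminus_0_r in H1, Hr.
  apply (Rmin_le_of_energy_bound a K (w1 t) (w t)); [lra | | exact H1 | | apply sum_nonneg; lra].
  - unfold K. rewrite <- energy_0.
    apply Rle_trans with (energy t); [apply energy_nondecreasing | apply energy_le]; lra.
  - apply (Rmult_lt_compat_l (16 * a)) in Hr; [| lra].
    replace (16 * a * (K / (16 * a))) with K in Hr by (field; lra). exact Hr.
Qed.

Lemma damped_sum_eq0 t : 0 <= t -> damped_sum t = 0.
Proof.
  intros ht. apply Rle_antisym.
  - replace 0 with (damped_sum 0); [apply damped_sum_nonincreasing; lra |].
    unfold damped_sum. rewrite w1_0, w_0_eq0. ring.
  - unfold damped_sum. pose proof (exp_pos (- a * t)). pose proof (sum_nonneg t ht).
    apply Rmult_le_pos; lra.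
Qed.

Lemma w_eq0 t : 0 <= t -> w t = 0.
Proof.
  intros ht. destruct (Rle_lt_or_eq_dec _ _ ht) as [Ht | <-]; [| exact w_0_eq0].
  assert (Hconst : is_derive damped_sum t 0).
  { apply (is_derive_ext_loc (fun _ => 0)); [| apply (is_derive_const 0)].
    exists (mkposreal t Ht). intros y Hy. change (Rabs (y - t) < t) in Hy.
    apply Rabs_def2 in Hy. symmetry. apply damped_sum_eq0. lra. }
  pose proof (is_derive_unique _ _ _ (damped_sum_derive t Ht)) as Hd.
  rewrite (is_derive_unique _ _ _ Hconst) in Hd.
  assert (Hc : 0 < a / 2 * exp (- a * t) * exp (- t))
    by (pose proof (exp_pos (- a * t)); pose proof (exp_pos (- t));
        apply Rmult_lt_0_compat; [apply Rmult_lt_0_compat |]; lra).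
  assert (Hw2 : w t ^ 2 = 0) by (apply (Rmult_eq_reg_l (a / 2 * exp (- a * t) * exp (- t))); lra).
  destruct (Req_dec (w t) 0) as [| Hne]; [assumption |].
  exfalso. exact (pow_nonzero _ 2 Hne Hw2).
Qed.

End RadialNavier.

Theorem theorem3p4 (N : nat) (w w1 w2 : R -> R) :
  (4 <= N)%nat ->
  C2_halfline w w1 w2 ->
  (forall t, 0 <= t ->
     - w2 t + (INR N - 2) * w1 t + (INR N - 1) * w t
       = (INR N - 1) / 2 * exp (- t) * (w t) ^ 2) ->
  w1 0 - (INR N - 1) * w 0 = 0 ->
  is_lim w p_infty 0 ->
  forall t, 0 <= t -> w t = 0.
Proof.
  intros HN [[Dw Dw0] [[Dw1 Dw10] _]] Hode Hbc Hlim.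
  assert (HN4 : 4 <= INR N) by (replace 4 with (INR 4) by (simpl; ring); apply le_INR, HN).
  apply (w_eq0 (INR N - 1) w w1 w2).
  - lra.
  - exact Dw.
  - exact Dw1.
  - exact (right_continuous_of_right_derive w (w1 0) Dw0).
  - exact (right_continuous_of_right_derive w1 (w2 0) Dw10).
  - intros t ht. replace (INR N - 1 - 1) with (INR N - 2) by ring. apply Hode. lra.
  - lra.
  - exact Hlim.
Qed.
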